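(* Assume (H1), (H2), fix $\lambda>f'(0)$, and let $s_*$ be a $\lambda$-conjugate point. Let $p(\cdot;\lambda)$, $q(\cdot;\lambda)$ be solutions of $q'=B(x,\lambda)q$ decaying as $x\to-\infty$ such that $p(s_*;\lambda),q(s_*;\lambda)$ form a basis of $\mathbb E^u_-(s_*,\lambda)$ and $p(s_*;\lambda)\in\ell_*^{sand}$. Then there is $\alpha\in\mathbb R$ such that $p(s_*;\lambda)=(0,\ p_2(s_*;\lambda),\ p_3(s_*;\lambda),\ 0)^T$ and $q(s_*;\lambda)=(\alpha p_2(s_*;\lambda),\ q_2(s_*;\lambda),\ q_3(s_*;\lambda),\ \alpha p_3(s_*;\lambda))^T$.
   Context: Fix real $\nu,\mu$ and $f(u)=\nu u^2-u^3-\mu u$. (H1): $\varphi$ is a smooth stationary solution of $u_t=-(1+\partial_x^2)^2u+f(u)$ with $\varphi\to0$ at $\pm\infty$. (H2): $f'(0)<0$. $B(x,\lambda)=\begin{pmatrix}0&0&0&1\\0&0&1&-2\\-\lambda-1+f'(\varphi(x))&0&0&0\\0&1&0&0\end{pmatrix}$. $\mathbb E^u_-(x,\lambda)$ is the set of values $q(x)$ of solutions of $q'=B(y,\lambda)q$ with $q(y)\to0$ as $y\to-\infty$; it is Lagrangian for $\omega(u,v)=\langle u,Jv\rangle$, $J=\begin{pmatrix}0&I_2\\-I_2&0\end{pmatrix}$. $\ell_*^{sand}=\{q\in\mathbb R^4:q_1=q_4=0\}$; $s$ is a $\lambda$-conjugate point if $\mathbb E^u_-(s,\lambda)\cap\ell_*^{sand}\neq\{0\}$.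 *)

From HB Require Import structures.
From mathcomp Require Import all_boot all_order all_algebra.
From mathcomp Require Import all_classical all_reals all_analysis.
Set Implicit Arguments. Unset Strict Implicit. Unset Printing Implicit Defensive.
Import Order.TTheory GRing.Theory Num.Theory.
Import numFieldNormedType.Exports.
Local Open Scope classical_set_scope.
Local Open Scope ring_scope.

Section Defs.
Variable R : realType.

Definition vec4 (a b c d : R) : 'cV[R]_4 :=
  \col_(i < 4) nth 0 [:: a; b; c; d] i.

(* 1-based coordinates q_1, ..., q_4 of a vector of R^4 *)
Definition c1 (v : 'cV[R]_4) : R := v (@inord 3 0) ord0.
Definition c2 (v : 'cV[R]_4) : R := v (@inord 3 1) ord0.
Definition c3 (v : 'cV[R]_4) : R := v (@inord 3 2) ord0.
Definition c4 (v : 'cV[R]_4) : R := v (@inord 3 3) ord0.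

Definition fnl (nu mu u : R) : R := nu * u ^+ 2 - u ^+ 3 - mu * u.
Definition fnl' (nu mu u : R) : R := 2 * nu * u - 3 * u ^+ 2 - mu.

(* (H1): phi smooth stationary solution of u_t = -(1+d_x^2)^2 u + f(u),
   i.e. -(phi + 2 phi'' + phi'''') + f(phi) = 0, with phi -> 0 at +-oo *)
Definition H1 (nu mu : R) (phi : R -> R) : Prop :=
  (forall (n : nat) (x : R), derivable (derive1n n phi) x 1) /\
  (forall x : R, - (phi x + 2 * derive1n 2 phi x + derive1n 4 phi x)
                 + fnl nu mu (phi x) = 0) /\
  (phi x @[x --> -oo] --> (0:R)) /\ (phi x @[x --> +oo] --> (0:R)).

Definition H2 (nu mu : R) : Prop := fnl' nu mu 0 < 0.

Definition Bmat (nu mu : R) (phi : R -> R) (lam x : R) : 'M[R]_4 :=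
  let a := - lam - 1 + fnl' nu mu (phi x) in
  \matrix_(i < 4, j < 4)
    nth 0 (nth [::] [:: [:: 0; 0; 0; 1];
                        [:: 0; 0; 1; -2];
                        [:: a; 0; 0; 0];
                        [:: 0; 1; 0; 0]] i) j.

Definition is_sol (nu mu : R) (phi : R -> R) (lam : R) (q : R -> 'cV[R]_4) : Prop :=
  forall x : R, is_derive x 1 q (Bmat nu mu phi lam x *m q x).

Definition decays_minus (q : R -> 'cV[R]_4) : Prop :=
  q y @[y --> -oo] --> (0 : 'cV[R]_4).

Definition Eu (nu mu : R) (phi : R -> R) (lam x : R) : set 'cV[R]_4 :=
  [set v | exists q : R -> 'cV[R]_4,
      is_sol nu mu phi lam q /\ decays_minus q /\ q x = v].

Definition lsand : set 'cV[R]_4 := [set v | c1 v = 0 /\ c4 v = 0].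

Definition conj_point (nu mu : R) (phi : R -> R) (lam s : R) : Prop :=
  exists v, Eu nu mu phi lam s v /\ lsand v /\ v <> 0.

Definition is_basis2 (E : set 'cV[R]_4) (u v : 'cV[R]_4) : Prop :=
  (forall a b : R, a *: u + b *: v = 0 -> a = 0 /\ b = 0) /\
  E = [set w | exists a b : R, w = a *: u + b *: v].

End Defs.

From HB Require Import structures.
From mathcomp Require Import all_boot all_order all_algebra.
From mathcomp Require Import all_classical all_reals all_analysis.
From mathcomp Require Import ring.
Import Order.TTheory GRing.Theory Num.Theory.
Import numFieldNormedType.Exports.
Local Open Scope classical_set_scope.
Local Open Scope ring_scope.

(* The matrix B(x, lambda) is Hamiltonian for omega(u, v) = <u, J v>: omega(B u, v) + omega(u, B v)
   = 0 for every value of the entry -lambda - 1 + f'(phi x). Hence omega(p x, q x) is constant along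
   any two solutions, and when both decay at -oo this constant is 0, i.e. E^u_- is isotropic. With
   p(s) in l_*^sand the identity omega(p s, q s) = 0 reads p2 q4 - p3 q1 = 0, and (p2, p3) <> 0 since
   p(s) <> 0 by linear independence, so (q1, q4) is proportional to (p2, p3). *)

Lemma is_derive_mx_entry {R : realFieldType} {V : normedModType R} {m n : nat}
    (M : V -> 'M[R]_(m, n)) (t v : V) (dM : 'M[R]_(m, n)) (i : 'I_m) (j : 'I_n) :
  is_derive t v M dM -> is_derive t v (fun x => M x i j) (dM i j).
Proof.
move=> [dMt <-]; apply: DeriveDef; first exact: (derivable_mxP M t v).1 dMt i j.
by rewrite derive_mx // mxE.
Qed.

Lemma cvg_mx_entry {R : realFieldType} {T : Type} {m n : nat} {F : set_system T}
    {FF : Filter F} {M : T -> 'M[R]_(m, n)} {L : 'M[R]_(m, n)} (i : 'I_m) (j : 'I_n) :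
  M x @[x --> F] --> L -> M x i j @[x --> F] --> L i j.
Proof. exact: continuous_cvg _ (@coord_continuous R m n i j L). Qed.

Section Coordinates.
Context {R : realType}.
Implicit Types (u v : 'cV[R]_4) (a b c d : R).

Lemma vec4_coords v : v = vec4 (c1 v) (c2 v) (c3 v) (c4 v).
Proof.
apply/matrixP => i j; rewrite (ord1 j) mxE.
by case: i => [[|[|[|[|k]]]] Hi] //=; congr (v _ _); apply/val_inj; rewrite /= inordK.
Qed.

Lemma c1_vec4 a b c d : c1 (vec4 a b c d) = a.
Proof. by rewrite /c1 mxE inordK. Qed.
Lemma c2_vec4 a b c d : c2 (vec4 a b c d) = b.
Proof. by rewrite /c2 mxE inordK. Qed.
Lemma c3_vec4 a b c d : c3 (vec4 a b c d) = c.
Proof. by rewrite /c3 mxE inordK. Qed.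
Lemma c4_vec4 a b c d : c4 (vec4 a b c d) = d.
Proof. by rewrite /c4 mxE inordK. Qed.

Lemma vec4_0 : vec4 0 0 0 0 = 0 :> 'cV[R]_4.
Proof. by apply/matrixP => i j; rewrite !mxE; case: i => [[|[|[|[|k]]]] Hi]. Qed.

Lemma vec4P u v :
  c1 u = c1 v -> c2 u = c2 v -> c3 u = c3 v -> c4 u = c4 v -> u = v.
Proof. by move=> e1 e2 e3 e4; rewrite [u]vec4_coords [v]vec4_coords e1 e2 e3 e4. Qed.

End Coordinates.

Lemma Bmat_mulmx {R : realType} (nu mu : R) (phi : R -> R) (lam x : R) (v : 'cV[R]_4) :
  Bmat nu mu phi lam x *m v =
  vec4 (c4 v) (c3 v - 2 * c4 v) ((- lam - 1 + fnl' nu mu (phi x)) * c1 v) (c2 v).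
Proof.
have [e0 e1 e2 e3] : [/\ ord0 = inord 0 :> 'I_4, lift ord0 ord0 = inord 1 :> 'I_4,
    lift ord0 (lift ord0 ord0) = inord 2 :> 'I_4
  & lift ord0 (lift ord0 (lift ord0 ord0)) = inord 3 :> 'I_4].
  by split; apply: val_inj; rewrite /= inordK.
apply: vec4P; rewrite ?c1_vec4 ?c2_vec4 ?c3_vec4 ?c4_vec4 /c1 /c2 /c3 /c4.
all: rewrite !mxE !big_ord_recl big_ord0 !mxE /= e1 e2 e3 !inordK //= ?e0.
all: by rewrite ?mul0r ?mul1r ?add0r ?addr0 ?mulNr.
Qed.

Definition omega4 {R : realType} (u v : 'cV[R]_4) : R :=
  c1 u * c3 v + c2 u * c4 v - c3 u * c1 v - c4 u * c2 v.

Lemma omega4_Bmat {R : realType} (nu mu : R) (phi : R -> R) (lam x : R) (u v : 'cV[R]_4) :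
  omega4 (Bmat nu mu phi lam x *m u) v + omega4 u (Bmat nu mu phi lam x *m v) = 0.
Proof.
rewrite /omega4 !Bmat_mulmx !c1_vec4 !c2_vec4 !c3_vec4 !c4_vec4; ring.
Qed.

Section SolutionCurves.
Context {R : realType}.
Implicit Types (p q : R -> 'cV[R]_4) (x : R) (dp dq : 'cV[R]_4).

Lemma is_derive_omega4 p q x dp dq :
  is_derive x 1 p dp -> is_derive x 1 q dq ->
  is_derive x 1 (fun t => omega4 (p t) (q t)) (omega4 dp (q x) + omega4 (p x) dq).
Proof.
move=> Dp Dq.
have [p1 p2 p3 p4] : [/\ is_derive x 1 (fun t => c1 (p t)) (c1 dp),
    is_derive x 1 (fun t => c2 (p t)) (c2 dp), is_derive x 1 (fun t => c3 (p t)) (c3 dp)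
  & is_derive x 1 (fun t => c4 (p t)) (c4 dp)] by split; exact: is_derive_mx_entry.
have [q1 q2 q3 q4] : [/\ is_derive x 1 (fun t => c1 (q t)) (c1 dq),
    is_derive x 1 (fun t => c2 (q t)) (c2 dq), is_derive x 1 (fun t => c3 (q t)) (c3 dq)
  & is_derive x 1 (fun t => c4 (q t)) (c4 dq)] by split; exact: is_derive_mx_entry.
(* instance resolution computes the derivative of the polynomial from p1, ..., q4 *)
apply: is_derive_eq.
by rewrite /omega4 /GRing.scale /=; ring.
Qed.

Lemma omega4_decays {p q} :
  decays_minus p -> decays_minus q -> omega4 (p y) (q y) @[y --> -oo] --> (0 : R).
Proof.
have coord0 (f : R -> 'cV[R]_4) k : decays_minus f ->
    f y (inord k) ord0 @[y --> -oo] --> (0 : R).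
  by move=> /(cvg_mx_entry (inord k) ord0); rewrite mxE.
move=> Dp Dq.
have := cvgB (cvgB (cvgD (cvgM (coord0 _ 0 Dp) (coord0 _ 2 Dq))
  (cvgM (coord0 _ 1 Dp) (coord0 _ 3 Dq))) (cvgM (coord0 _ 2 Dp) (coord0 _ 0 Dq)))
  (cvgM (coord0 _ 3 Dp) (coord0 _ 1 Dq)).
rewrite !mulr0 !addr0 !subr0; apply.
Qed.

Lemma omega4_sol_cst (nu mu : R) (phi : R -> R) (lam : R) p q x y :
  is_sol nu mu phi lam p -> is_sol nu mu phi lam q ->
  omega4 (p x) (q x) = omega4 (p y) (q y).
Proof.
move=> Sp Sq; apply: (is_derive_0_is_cst (f := fun t => omega4 (p t) (q t))) => t.
by rewrite -(omega4_Bmat nu mu phi lam t (p t) (q t)); exact: is_derive_omega4.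
Qed.

Lemma omega4_sol_decays_eq0 {nu mu : R} {phi : R -> R} {lam : R} {p q} x :
  is_sol nu mu phi lam p -> decays_minus p ->
  is_sol nu mu phi lam q -> decays_minus q -> omega4 (p x) (q x) = 0.
Proof.
move=> Sp Dp Sq Dq; have := omega4_decays Dp Dq.
have -> : (fun y => omega4 (p y) (q y)) = cst (omega4 (p x) (q x)).
  by apply/funext => y; apply: omega4_sol_cst.
exact: cvg_unique (cvg_cst _).
Qed.

End SolutionCurves.

Lemma lsand_omega4_eq0 {R : realType} {u v : 'cV[R]_4} :
  lsand u -> u != 0 -> omega4 u v = 0 ->
  exists alpha : R, c1 v = alpha * c2 u /\ c4 v = alpha * c3 u.
Proof.
move=> [u1 u4] u_neq0; rewrite /omega4 u1 u4 !mul0r add0r subr0 => /eqP.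
rewrite subr_eq0 => /eqP uvE.
have [u2|u2_neq0] := eqVneq (c2 u) 0.
- have u3_neq0 : c3 u != 0.
    by apply: contraNneq u_neq0 => u3; rewrite [u]vec4_coords u1 u2 u3 u4 vec4_0.
  exists (c4 v / c3 u); rewrite u2 mulr0 divfK //; split => //.
  by move: uvE; rewrite u2 mul0r => /esym /eqP; rewrite mulf_eq0 (negPf u3_neq0) => /eqP.
- exists (c1 v / c2 u); rewrite divfK //; split => //.
  by rewrite -[c4 v](mulKf u2_neq0) uvE; ring.
Qed.

Theorem lemma3 (R : realType) (nu mu : R) (phi : R -> R) (lam s : R)
  (p q : R -> 'cV[R]_4) :
  H1 nu mu phi -> H2 nu mu ->
  fnl' nu mu 0 < lam ->
  conj_point nu mu phi lam s ->
  is_sol nu mu phi lam p -> decays_minus p ->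
  is_sol nu mu phi lam q -> decays_minus q ->
  is_basis2 (Eu nu mu phi lam s) (p s) (q s) ->
  lsand (p s) ->
  exists alpha : R,
    p s = vec4 0 (c2 (p s)) (c3 (p s)) 0 /\
    q s = vec4 (alpha * c2 (p s)) (c2 (q s)) (c3 (q s)) (alpha * c3 (p s)).
Proof.
move=> _ _ _ _ Sp Dp Sq Dq [indep _] ps_lsand.
have ps_neq0 : p s != 0.
  apply/eqP => ps0; have := indep 1 0; rewrite ps0 scaler0 scale0r addr0.
  by case=> // /eqP; rewrite oner_eq0.
have [alpha [qs1 qs4]] := lsand_omega4_eq0 ps_lsand ps_neq0
  (omega4_sol_decays_eq0 s Sp Dp Sq Dq).
case: ps_lsand => ps1 ps4; exists alpha; split.
  by rewrite {1}[p s]vec4_coords ps1 ps4.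
by rewrite {1}[q s]vec4_coords qs1 qs4.
Qed.
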